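(* Let $\kappa$ be an admissible kernel induced by $\mathbf a:\mathbb R^D\to\mathcal H$, and let $\mathcal S=\{\theta^\star_\ell\}_{\ell=1}^{m}\subset\mathbb R^D$ (pairwise distinct) be admissible with respect to $\kappa$. Then (i) the atoms $\mathbf a(\theta^\star_1),\dots,\mathbf a(\theta^\star_m)$ are linearly independent; (ii) with $\mathbf G\in\mathbb R^{m\times m}$, $\mathbf G[\ell,\ell']=\kappa(\theta^\star_\ell,\theta^\star_{\ell'})$, and $\mathbf g_\theta\in\mathbb R^m$, $\mathbf g_\theta[\ell]=\kappa(\theta,\theta^\star_\ell)$, one has $\|\mathbf G^{-1}\mathbf g_\theta\|_1<1$ for every $\theta\in\mathbb R^D\setminus\mathcal S$.
   Context: Kernel: $\kappa(\theta,\theta')=\langle\mathbf a(\theta),\mathbf a(\theta')\rangle$ on a real Hilbert space $\mathcal H$. The kernel is admissible if: (i) $\kappa(\theta,\theta)=1$ for all $\theta$; $\lim_{\theta'\to\theta}\kappa(\theta,\theta')=1$ for all $\theta$; for every $\varepsilon>0$ and $\theta$ there is a compact $K$ with $\sup_{\theta'\notin K}\kappa(\theta',\theta)<\varepsilon$; (ii) $0\le\kappa(\theta,\theta')<1$ whenever $\theta\ne\theta'$. A support $\{\theta^\star_\ell\}_{\ell=1}^k$ is admissible with respect to $\kappa$ if for every nonempty $T\subseteq\{1,\dots,k\}$ and every positive reals $\{c_\ell\}_{\ell\in T}$ with $\sum_{\ell\in T}c_\ell<1$, setting $\psi(\theta)=\sum_{\ell\in T}c_\ell\kappa(\theta,\theta^\star_\ell)$: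 (i) the set of global maximizers of $\psi$ over $\mathbb R^D$ is contained in $\{\theta^\star_\ell\}_{\ell\in T}$; (ii) if $\ell\in\{1,\dots,k\}\setminus T$ satisfies $\psi(\theta)-\kappa(\theta,\theta^\star_\ell)\le 0$ for all $\theta\in\{\theta^\star_{\ell'}\}_{\ell'\in T}$, then $\psi(\theta)-\kappa(\theta,\theta^\star_\ell)\le0$ for all $\theta\in\mathbb R^D$. *)

From Stdlib Require Import Reals Lra.
From Stdlib Require Fin.
Open Scope R_scope.

Fixpoint fsum {A : Type} (z : A) (add : A -> A -> A) (n : nat) : (Fin.t n -> A) -> A :=
  match n return (Fin.t n -> A) -> A with
  | O => fun _ => z
  | S k => fun f => add (f Fin.F1) (fsum z add k (fun i => f (Fin.FS i)))
  end.

Definition rsum (n : nat) (f : Fin.t n -> R) : R := fsum 0 Rplus n f.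

Definition RD (D : nat) := Fin.t D -> R.
Definition dist {D : nat} (x y : RD D) : R := sqrt (rsum D (fun i => (x i - y i) ^ 2)).
Definition enorm {D : nat} (x : RD D) : R := sqrt (rsum D (fun i => (x i) ^ 2)).

Definition is_open {D : nat} (U : RD D -> Prop) : Prop :=
  forall x, U x -> exists r, 0 < r /\ forall y, dist x y < r -> U y.
Definition is_closed {D : nat} (K : RD D -> Prop) : Prop := is_open (fun x => ~ K x).
Definition is_bounded {D : nat} (K : RD D -> Prop) : Prop :=
  exists r, forall x, K x -> enorm x <= r.
(* Heine-Borel: compact subsets of R^D are exactly the closed bounded ones. *)
Definition is_compact {D : nat} (K : RD D -> Prop) : Prop := is_closed K /\ is_bounded K.

Record HilbertSpace := {
  hcar :> Type;
  hzero : hcar;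
  hadd : hcar -> hcar -> hcar;
  hscal : R -> hcar -> hcar;
  inner : hcar -> hcar -> R;
  hadd_assoc : forall x y z, hadd x (hadd y z) = hadd (hadd x y) z;
  hadd_comm : forall x y, hadd x y = hadd y x;
  hadd_zero : forall x, hadd x hzero = x;
  hadd_opp : forall x, hadd x (hscal (-1) x) = hzero;
  hscal_one : forall x, hscal 1 x = x;
  hscal_assoc : forall a b x, hscal a (hscal b x) = hscal (a * b) x;
  hscal_distr_l : forall a x y, hscal a (hadd x y) = hadd (hscal a x) (hscal a y);
  hscal_distr_r : forall a b x, hscal (a + b) x = hadd (hscal a x) (hscal b x);
  inner_sym : forall x y, inner x y = inner y x;
  inner_lin : forall a x y z, inner (hadd (hscal a x) y) z = a * inner x z + inner y z;
  inner_pos : forall x, 0 <= inner x x;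
  inner_def : forall x, inner x x = 0 -> x = hzero;
  hcomplete : forall u : nat -> hcar,
    (forall eps, 0 < eps -> exists N, forall p q, (N <= p)%nat -> (N <= q)%nat ->
        sqrt (inner (hadd (u p) (hscal (-1) (u q))) (hadd (u p) (hscal (-1) (u q)))) < eps) ->
    exists l, forall eps, 0 < eps -> exists N, forall p, (N <= p)%nat ->
        sqrt (inner (hadd (u p) (hscal (-1) l)) (hadd (u p) (hscal (-1) l))) < eps
}.

Definition kappa {D : nat} (H : HilbertSpace) (a : RD D -> H) (t t' : RD D) : R :=
  inner H (a t) (a t').

Definition admissible_kernel {D : nat} (H : HilbertSpace) (a : RD D -> H) : Prop :=
  let k := kappa H a in
  (forall t, k t t = 1) /\
  (forall t eps, 0 < eps -> exists delta, 0 < delta /\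
      forall t', dist t t' < delta -> Rabs (k t t' - 1) < eps) /\
  (forall eps t, 0 < eps -> exists K : RD D -> Prop, is_compact K /\
      exists b, b < eps /\ forall t', ~ K t' -> k t' t <= b) /\
  (forall t t', t <> t' -> 0 <= k t t' /\ k t t' < 1).

Definition psi {D m : nat} (k : RD D -> RD D -> R) (ts : Fin.t m -> RD D)
  (T : Fin.t m -> bool) (c : Fin.t m -> R) (t : RD D) : R :=
  rsum m (fun l => if T l then c l * k t (ts l) else 0).

Definition admissible_support {D m : nat} (k : RD D -> RD D -> R) (ts : Fin.t m -> RD D) : Prop :=
  forall (T : Fin.t m -> bool) (c : Fin.t m -> R),
    (exists l, T l = true) ->
    (forall l, T l = true -> 0 < c l) ->
    rsum m (fun l => if T l then c l else 0) < 1 ->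
    (forall t, (forall t', psi k ts T c t' <= psi k ts T c t) ->
        exists l, T l = true /\ t = ts l) /\
    (forall l, T l = false ->
        (forall l', T l' = true -> psi k ts T c (ts l') - k (ts l') (ts l) <= 0) ->
        forall t, psi k ts T c t - k t (ts l) <= 0).

Definition lin_indep {m : nat} (H : HilbertSpace) (v : Fin.t m -> H) : Prop :=
  forall c : Fin.t m -> R,
    fsum (hzero H) (hadd H) m (fun l => hscal H (c l) (v l)) = hzero H ->
    forall l, c l = 0.

Definition delta {m : nat} (i j : Fin.t m) : R := if Fin.eq_dec i j then 1 else 0.
Definition is_inverse {m : nat} (G Gi : Fin.t m -> Fin.t m -> R) : Prop :=
  (forall i j, rsum m (fun k => Gi i k * G k j) = delta i j) /\
  (forall i j, rsum m (fun k => G i k * Gi k j) = delta i j).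
Definition matvec {m : nat} (M : Fin.t m -> Fin.t m -> R) (v : Fin.t m -> R) : Fin.t m -> R :=
  fun i => rsum m (fun k => M i k * v k).
Definition l1norm {m : nat} (v : Fin.t m -> R) : R := rsum m (fun i => Rabs (v i)).

(* For a support [U] and an atom [l] of [U], let [b] be the coefficients of the orthogonal
   projection of [a (ts l)] onto the other atoms of [U], and [r = a (ts l) - sum b_j a (ts j)]
   the residual.  By induction on [|U|], every such [b] is nonnegative with sum < 1, and so is
   the projection vector of any [a x] with [x] not an atom of [U]:
   - nonnegativity: applying property (ii) of the admissible support to the positive part of [b]
     shows [<a y, r> >= 0] for every [y], and the coefficient of [a x] on atom [l] is
     [<a x, r> / <r, a (ts l)>];
   - sum < 1: the dual vector [alpha], with [<sum alpha_j a (ts j), a (ts k)> = 1] on [U], has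
     positive coefficients; a scaled copy is an admissible weight vector whose [psi] is constant
     on the atoms, and [psi] attains its maximum (the kernel is continuous and vanishes at
     infinity) only at atoms by property (i), so [<sum alpha_j a (ts j), a x> < 1]; this inner
     product is the sum of the projection coefficients of [a x].
   For the full support the residuals are biorthogonal to the atoms with positive gaps, which gives
   linear independence and the inverse Gram matrix (row [l] is [r_l / <r_l, a (ts l)>]), and
   [G^-1 g_x] is the projection vector of [a x]. *)

From Stdlib Require Import Reals Lra Lia.
From Stdlib Require Rtopology.
From Stdlib Require Fin.
From Stdlib Require Import ClassicalEpsilon Classical.
Open Scope R_scope.

Lemma rsum_S n (f : Fin.t (S n) -> R) :
  rsum (S n) f = f Fin.F1 + rsum n (fun i => f (Fin.FS i)).
Proof. reflexivity. Qed.

Lemma rsum_ext n (f g : Fin.t n -> R) : (forall i, f i = g i) -> rsum n f = rsum n g.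
Proof.
  induction n; intros E; [reflexivity|].
  rewrite !rsum_S, E, (IHn _ (fun i => g (Fin.FS i))); auto.
Qed.

Lemma rsum_0 n : rsum n (fun _ => 0) = 0.
Proof. induction n; [reflexivity|]. rewrite rsum_S, IHn; lra. Qed.

Lemma rsum_eq_0 n (f : Fin.t n -> R) : (forall i, f i = 0) -> rsum n f = 0.
Proof. intros E. rewrite (rsum_ext _ _ (fun _ => 0) E). apply rsum_0. Qed.

Lemma rsum_plus n (f g : Fin.t n -> R) : rsum n (fun i => f i + g i) = rsum n f + rsum n g.
Proof.
  induction n; [unfold rsum; simpl; lra|].
  rewrite !rsum_S, (IHn (fun i => f (Fin.FS i)) (fun i => g (Fin.FS i))). lra.
Qed.

Lemma rsum_minus n (f g : Fin.t n -> R) : rsum n (fun i => f i - g i) = rsum n f - rsum n g.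
Proof.
  induction n; [unfold rsum; simpl; lra|].
  rewrite !rsum_S, (IHn (fun i => f (Fin.FS i)) (fun i => g (Fin.FS i))). lra.
Qed.

Lemma rsum_scal_l n c (f : Fin.t n -> R) : rsum n (fun i => c * f i) = c * rsum n f.
Proof.
  induction n; [unfold rsum; simpl; lra|]. rewrite !rsum_S, (IHn (fun i => f (Fin.FS i))). lra.
Qed.

Lemma rsum_scal_r n c (f : Fin.t n -> R) : rsum n (fun i => f i * c) = rsum n f * c.
Proof. rewrite <- (Rmult_comm c), <- rsum_scal_l. apply rsum_ext; intros; ring. Qed.

Lemma rsum_le n (f g : Fin.t n -> R) : (forall i, f i <= g i) -> rsum n f <= rsum n g.
Proof.
  induction n; intros E; [unfold rsum; simpl; lra|]. rewrite !rsum_S.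
  pose proof (IHn (fun i => f (Fin.FS i)) (fun i => g (Fin.FS i)) (fun i => E (Fin.FS i))).
  specialize (E Fin.F1). lra.
Qed.

Lemma rsum_nonneg n (f : Fin.t n -> R) : (forall i, 0 <= f i) -> 0 <= rsum n f.
Proof. intros E. rewrite <- (rsum_0 n). apply rsum_le; auto. Qed.

Lemma rsum_term_le n (f : Fin.t n -> R) i : (forall j, 0 <= f j) -> f i <= rsum n f.
Proof.
  induction n; intros P; [inversion i|]. rewrite rsum_S.
  pattern i; apply Fin.caseS'.
  - pose proof (rsum_nonneg n (fun j => f (Fin.FS j)) (fun j => P _)). lra.
  - intro j. pose proof (IHn (fun j => f (Fin.FS j)) j (fun j => P _)).
    specialize (P Fin.F1). lra.
Qed.

Lemma rsum_const_le n (f : Fin.t n -> R) b : (forall j, f j <= b) -> rsum n f <= INR n * b.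
Proof.
  induction n; intros P; [unfold rsum; simpl; lra|]. rewrite rsum_S, S_INR.
  pose proof (IHn (fun j => f (Fin.FS j)) (fun j => P _)). specialize (P Fin.F1). lra.
Qed.

Lemma rsum_abs_le n (f : Fin.t n -> R) : Rabs (rsum n f) <= rsum n (fun i => Rabs (f i)).
Proof.
  induction n; [unfold rsum; simpl; rewrite Rabs_R0; lra|]. rewrite !rsum_S.
  eapply Rle_trans; [apply Rabs_triang|]. specialize (IHn (fun i => f (Fin.FS i))). lra.
Qed.

Lemma rsum_mul_abs_le n (c g : Fin.t n -> R) e :
  (forall j, Rabs (g j) <= e) ->
  Rabs (rsum n (fun j => c j * g j)) <= rsum n (fun j => Rabs (c j)) * e.
Proof.
  intros Hg. eapply Rle_trans; [apply rsum_abs_le|]. rewrite <- rsum_scal_r.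
  apply rsum_le. intros j. rewrite Rabs_mult.
  apply Rmult_le_compat_l; [apply Rabs_pos | apply Hg].
Qed.

Lemma rsum_comm n p (f : Fin.t n -> Fin.t p -> R) :
  rsum n (fun i => rsum p (fun j => f i j)) = rsum p (fun j => rsum n (fun i => f i j)).
Proof.
  induction n.
  - symmetry. apply rsum_0.
  - rewrite rsum_S, IHn, <- rsum_plus. reflexivity.
Qed.

Lemma delta_refl n (i : Fin.t n) : delta i i = 1.
Proof. unfold delta; destruct (Fin.eq_dec i i); congruence. Qed.

Lemma delta_neq n (i j : Fin.t n) : i <> j -> delta i j = 0.
Proof. unfold delta; destruct (Fin.eq_dec i j); congruence. Qed.

Lemma rsum_delta_l n (i : Fin.t n) (f : Fin.t n -> R) : rsum n (fun k => delta i k * f k) = f i.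
Proof.
  induction n; [inversion i|]. rewrite rsum_S. revert f. pattern i; apply Fin.caseS'.
  - intros f. rewrite delta_refl, (rsum_ext _ _ (fun _ => 0)), rsum_0; [ring|].
    intros k. rewrite delta_neq; [ring|]. intro E; inversion E.
  - intros p f. rewrite delta_neq by (intro E; inversion E).
    rewrite (rsum_ext _ _ (fun k => delta p k * f (Fin.FS k))), IHn; [ring|].
    intros k. unfold delta.
    destruct (Fin.eq_dec (Fin.FS p) (Fin.FS k)) as [E|E], (Fin.eq_dec p k); subst;
      try reflexivity; [apply Fin.FS_inj in E|]; congruence.
Qed.

Lemma fin_eventually n (P : Fin.t n -> nat -> Prop) :
  (forall i, exists N, forall k, (N <= k)%nat -> P i k) ->
  exists N, forall k, (N <= k)%nat -> forall i, P i k.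
Proof.
  induction n; intros E.
  - exists 0%nat. intros k _ i. inversion i.
  - destruct (IHn (fun i => P (Fin.FS i)) (fun i => E (Fin.FS i))) as [N1 H1].
    destruct (E Fin.F1) as [N0 H0]. exists (Nat.max N0 N1). intros k Hk i.
    pattern i; apply Fin.caseS'; [apply H0 | intros p; apply H1]; lia.
Qed.

Lemma fin_eventually_R n (P : Fin.t n -> R -> Prop) :
  (forall i, exists r, forall x, r < x -> P i x) ->
  exists r, forall x, r < x -> forall i, P i x.
Proof.
  induction n; intros E.
  - exists 0. intros x _ i. inversion i.
  - destruct (IHn (fun i => P (Fin.FS i)) (fun i => E (Fin.FS i))) as [r1 H1].
    destruct (E Fin.F1) as [r0 H0]. exists (Rmax r0 r1). intros x Hx i.
    pose proof (Rmax_l r0 r1). pose proof (Rmax_r r0 r1).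
    pattern i; apply Fin.caseS'; [apply H0 | intros p; apply H1]; lra.
Qed.

Section Inner.
Variable H : HilbertSpace.

Lemma inner_zero_l z : inner H (hzero H) z = 0.
Proof.
  pose proof (inner_lin H 1 (hzero H) (hzero H) z) as L.
  rewrite hscal_one, hadd_zero in L. lra.
Qed.

Lemma inner_scal_l c x z : inner H (hscal H c x) z = c * inner H x z.
Proof.
  pose proof (inner_lin H c x (hzero H) z) as L. rewrite hadd_zero, inner_zero_l in L. lra.
Qed.

Lemma inner_add_l x y z : inner H (hadd H x y) z = inner H x z + inner H y z.
Proof. pose proof (inner_lin H 1 x y z) as L. rewrite hscal_one in L. lra. Qed.

Lemma inner_scal_r c x z : inner H z (hscal H c x) = c * inner H z x.
Proof. rewrite inner_sym, inner_scal_l, inner_sym; reflexivity. Qed.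

Definition hsub (x y : H) : H := hadd H x (hscal H (-1) y).

Lemma inner_sub_l x y z : inner H (hsub x y) z = inner H x z - inner H y z.
Proof. unfold hsub. rewrite inner_add_l, inner_scal_l. ring. Qed.

Lemma inner_sub_r x y z : inner H z (hsub x y) = inner H z x - inner H z y.
Proof. rewrite inner_sym, inner_sub_l, (inner_sym H x), (inner_sym H y); reflexivity. Qed.

Definition lincomb {n} (v : Fin.t n -> H) (c : Fin.t n -> R) : H :=
  fsum (hzero H) (hadd H) n (fun l => hscal H (c l) (v l)).

Lemma inner_lincomb_l n (v : Fin.t n -> H) c z :
  inner H (lincomb v c) z = rsum n (fun l => c l * inner H (v l) z).
Proof.
  induction n; [apply inner_zero_l|].
  unfold lincomb; simpl fsum. rewrite inner_add_l, inner_scal_l, rsum_S.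
  f_equal. apply IHn.
Qed.

Lemma inner_lincomb_r n (v : Fin.t n -> H) c z :
  inner H z (lincomb v c) = rsum n (fun l => c l * inner H z (v l)).
Proof.
  rewrite inner_sym, inner_lincomb_l. apply rsum_ext. intros; rewrite inner_sym; reflexivity.
Qed.

Lemma inner_unit_sq_le d u : inner H u u = 1 -> (inner H d u) ^ 2 <= inner H d d.
Proof.
  intros Hu. pose proof (inner_pos H (hsub d (hscal H (inner H d u) u))) as P.
  rewrite inner_sub_l, !inner_sub_r, !inner_scal_l, !inner_scal_r, Hu, (inner_sym H u d) in P.
  nra.
Qed.

End Inner.

Arguments hsub {H}.
Arguments lincomb {H n}.

Section Kernel.
Variables (D : nat) (H : HilbertSpace) (a : RD D -> H).
Hypothesis Hk : admissible_kernel H a.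

Lemma kappa_sym t t' : kappa H a t t' = kappa H a t' t.
Proof. apply inner_sym. Qed.

Lemma kappa_bounds t t' : 0 <= kappa H a t t' <= 1.
Proof.
  destruct Hk as [K1 [_ [_ K4]]]. destruct (classic (t = t')) as [<-|E].
  - rewrite K1. lra.
  - specialize (K4 t t' E). lra.
Qed.

(* Cauchy-Schwarz against the unit vector [a s]:
   |k(t',s) - k(t,s)|^2 <= |a t' - a t|^2 = 2 - 2 k(t,t'). *)
Lemma kappa_equicontinuous t e : 0 < e -> exists d, 0 < d /\
  forall t' s, dist t t' < d -> Rabs (kappa H a t' s - kappa H a t s) < e.
Proof.
  intros He. destruct Hk as [K1 [K2 _]].
  destruct (K2 t (e ^ 2 / 2)) as [d [Hd Hd2]]; [nra|].
  exists d. split; auto. intros t' s Htt'. specialize (Hd2 t' Htt').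
  pose proof (inner_unit_sq_le H (hsub (a t') (a t)) (a s) (K1 s)) as CS.
  rewrite !inner_sub_l, !inner_sub_r in CS. unfold kappa in *.
  rewrite (inner_sym H (a t') (a t)), K1, K1 in CS. apply Rabs_def2 in Hd2.
  rewrite <- (Rabs_pos_eq e) by lra. apply Rsqr_lt_abs_0. unfold Rsqr. nra.
Qed.

End Kernel.

Lemma coord_le_enorm D (x : RD D) i : Rabs (x i) <= enorm x.
Proof.
  unfold enorm. rewrite <- sqrt_Rsqr_abs. apply sqrt_le_1_alt.
  replace (Rsqr (x i)) with (x i ^ 2) by (unfold Rsqr; ring).
  apply (rsum_term_le D (fun j => x j ^ 2)). intros; apply pow2_ge_0.
Qed.

Lemma dist_lt_of_coords D (x y : RD D) e :
  0 < e -> (forall i, Rabs (x i - y i) < e / (INR D + 1)) -> dist x y < e.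
Proof.
  intros He Hi. pose proof (pos_INR D) as HD. set (e' := e / (INR D + 1)) in Hi.
  assert (He' : e = e' * (INR D + 1)) by (unfold e'; field; lra).
  assert (S : rsum D (fun i => (x i - y i) ^ 2) <= INR D * e' ^ 2).
  { apply rsum_const_le. intros j. specialize (Hi j). apply Rabs_def2 in Hi. nra. }
  unfold dist. rewrite <- (sqrt_pow2 e) by lra. apply sqrt_lt_1_alt. split.
  - apply rsum_nonneg. intros; apply pow2_ge_0.
  - assert (0 < e') by nra. nra.
Qed.

Lemma inv_INR_S_le (n N : nat) : (N <= n)%nat -> / (INR n + 1) <= / (INR N + 1).
Proof. intros Hn. apply le_INR in Hn. pose proof (pos_INR N). apply Rinv_le_contravar; lra. Qed.

Lemma inv_INR_S_lt e : 0 < e -> exists N : nat, / (INR N + 1) < e.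
Proof.
  intros He. destruct (archimed_cor1 e He) as [N [HN HN0]]. exists N.
  apply lt_INR in HN0. simpl in HN0. eapply Rle_lt_trans; [|exact HN].
  apply Rinv_le_contravar; lra.
Qed.

Definition strictly_increasing (phi : nat -> nat) : Prop := forall n, (phi n < phi (S n))%nat.

Lemma strictly_increasing_ge phi : strictly_increasing phi -> forall n, (n <= phi n)%nat.
Proof. intros H n; induction n; [lia|]. specialize (H n). lia. Qed.

Lemma strictly_increasing_comp phi psi :
  strictly_increasing phi -> strictly_increasing psi -> strictly_increasing (fun n => phi (psi n)).
Proof.
  intros H1 H2 n. assert (Mono : forall p q, (p < q)%nat -> (phi p < phi q)%nat).
  { intros p q Hpq. induction Hpq; [apply H1|]. specialize (H1 m). lia. }
  apply Mono, H2.
Qed.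

Lemma Un_cv_subseq u l phi : Un_cv u l -> strictly_increasing phi -> Un_cv (fun n => u (phi n)) l.
Proof.
  intros C I e He. destruct (C e He) as [N HN]. exists N. intros n Hn. apply HN.
  pose proof (strictly_increasing_ge phi I n). lia.
Qed.

Fixpoint extract (g : nat * nat -> nat) (n : nat) : nat :=
  match n with
  | O => g (O, O)
  | S n' => g (S (extract g n'), S n')
  end.

(* [extract g] picks, at step [n], an index beyond the previous one that is [1/(n+1)]-close to
   the cluster point. *)
Lemma bounded_cv_subseq (u : nat -> R) r : (forall n, Rabs (u n) <= r) ->
  exists phi, strictly_increasing phi /\ exists l, Un_cv (fun n => u (phi n)) l.
Proof.
  intros Hb.
  destruct (Rtopology.Bolzano_Weierstrass u (fun c => -r <= c <= r) (Rtopology.compact_P3 (-r) r))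
    as [l Hl].
  { intros n. specialize (Hb n). pose proof (Rle_abs (u n)). pose proof (Rle_abs (- u n)).
    rewrite Rabs_Ropp in *. lra. }
  assert (G : forall Nk : nat * nat,
             exists p, (fst Nk <= p)%nat /\ Rabs (u p - l) < / (INR (snd Nk) + 1)).
  { intros [N k].
    assert (Hp : 0 < / (INR k + 1)) by (apply Rinv_0_lt_compat; pose proof (pos_INR k); lra).
    destruct (Hl (Rtopology.disc l (mkposreal _ Hp)) N) as [p Hp']; [|exists p; exact Hp'].
    exists (mkposreal _ Hp). intros x Hx; exact Hx. }
  destruct (choice _ G) as [g Hg]. exists (extract g). split.
  - intros n. exact (proj1 (Hg (S (extract g n), S n))).
  - exists l. intros e He. destruct (inv_INR_S_lt e He) as [N HN]. exists N. intros n Hn.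
    assert (Hn' : Rabs (u (extract g n) - l) < / (INR n + 1))
      by (destruct n; [exact (proj2 (Hg (O, O))) | exact (proj2 (Hg (_, _)))]).
    pose proof (inv_INR_S_le n N Hn). unfold Rdist. lra.
Qed.

Lemma bounded_family_cv_subseq n (u : Fin.t n -> nat -> R) r :
  (forall i k, Rabs (u i k) <= r) ->
  exists phi, strictly_increasing phi /\ forall i, exists l, Un_cv (fun k => u i (phi k)) l.
Proof.
  induction n; intros Hb.
  - exists (fun k => k). split; [intros k; lia | intros i; inversion i].
  - destruct (IHn (fun i => u (Fin.FS i)) (fun i => Hb (Fin.FS i))) as [phi [Iphi Hphi]].
    destruct (bounded_cv_subseq (fun k => u Fin.F1 (phi k)) r) as [psi [Ipsi [l Hl]]];
      [intros; apply Hb|].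
    exists (fun k => phi (psi k)). split; [apply strictly_increasing_comp; auto|].
    intros i. pattern i; apply Fin.caseS'; [exists l; exact Hl|].
    intros p. destruct (Hphi p) as [l' Hl']. exists l'.
    exact (Un_cv_subseq (fun k => u (Fin.FS p) (phi k)) l' psi Hl' Ipsi).
Qed.

Lemma bounded_cv_subseq_RD D (v : nat -> RD D) r : (forall n, enorm (v n) <= r) ->
  exists phi, strictly_increasing phi /\ exists y, forall e, 0 < e ->
    exists N, forall n, (N <= n)%nat -> dist y (v (phi n)) < e.
Proof.
  intros Hb.
  destruct (bounded_family_cv_subseq D (fun i k => v k i) r) as [phi [Iphi Hphi]].
  { intros i k. eapply Rle_trans; [apply coord_le_enorm | apply Hb]. }
  destruct (choice _ Hphi) as [y Hy]. exists phi. split; auto. exists y. intros e He.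
  assert (He' : 0 < e / (INR D + 1)) by (apply Rdiv_lt_0_compat; pose proof (pos_INR D); lra).
  destruct (fin_eventually D (fun i k => Rabs (y i - v (phi k) i) < e / (INR D + 1))) as [N HN].
  { intros i. destruct (Hy i _ He') as [N HN]. exists N. intros k Hk.
    rewrite Rabs_minus_sym. apply HN. lia. }
  exists N. intros n Hn. apply dist_lt_of_coords; auto.
Qed.

Lemma sup_approx_seq {T} (f : T -> R) (t0 : T) Mb : (forall t, f t <= Mb) ->
  exists M, (forall t, f t <= M) /\ exists u : nat -> T, forall n, M - / (INR n + 1) < f (u n).
Proof.
  intros HMb. destruct (completeness (fun v => exists t, v = f t)) as [M [HM1 HM2]].
  - exists Mb. intros v [t ->]. apply HMb.
  - exists (f t0). exists t0. reflexivity.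
  - exists M. split; [intros t; apply HM1; exists t; reflexivity|].
    apply (choice (fun n t => M - / (INR n + 1) < f t)). intros n. apply NNPP. intros Hn.
    assert (Hp : 0 < / (INR n + 1)) by (apply Rinv_0_lt_compat; pose proof (pos_INR n); lra).
    enough (M <= M - / (INR n + 1)) by lra.
    apply HM2. intros v [t ->]. apply Rnot_lt_le. intros Hlt. apply Hn. exists t; exact Hlt.
Qed.

(* Near-maximizing points eventually exceed [b], hence stay in the ball of radius [r]; a cluster
   point of them is a maximizer by continuity. *)
Lemma continuous_attains_max D (f : RD D -> R) t0 r b :
  (forall t e, 0 < e -> exists d, 0 < d /\ forall t', dist t t' < d -> Rabs (f t' - f t) < e) ->
  (exists Mb, forall t, f t <= Mb) ->
  b < f t0 -> (forall t, r < enorm t -> f t <= b) ->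
  exists y, forall t, f t <= f y.
Proof.
  intros Hc [Mb HMb] Hb0 Hdec.
  destruct (sup_approx_seq f t0 Mb HMb) as [M [Hle [u Hu]]].
  pose proof (Hle t0). destruct (inv_INR_S_lt (M - b)) as [N0 HN0]; [lra|].
  assert (Hv : forall n, M - / (INR n + 1) < f (u (n + N0)%nat)).
  { intros n. pose proof (Hu (n + N0)%nat). pose proof (inv_INR_S_le (n + N0) n ltac:(lia)). lra. }
  assert (Hvb : forall n, enorm (u (n + N0)%nat) <= r).
  { intros n. apply Rnot_lt_le. intros Hr. specialize (Hdec _ Hr).
    pose proof (Hu (n + N0)%nat). pose proof (inv_INR_S_le (n + N0) N0 ltac:(lia)). lra. }
  destruct (bounded_cv_subseq_RD D _ r Hvb) as [phi [Iphi [y Hy]]].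
  exists y. intros t. eapply Rle_trans; [apply (Hle t)|].
  apply Rnot_lt_le. intros Hlt.
  destruct (Hc y ((M - f y) / 2)) as [d [Hd Hd2]]; [lra|].
  destruct (Hy d Hd) as [N1 HN1].
  destruct (inv_INR_S_lt ((M - f y) / 2)) as [N2 HN2]; [lra|].
  set (n := Nat.max N1 N2).
  specialize (Hd2 _ (HN1 n ltac:(unfold n; lia))). apply Rabs_def2 in Hd2.
  pose proof (Hv (phi n)). pose proof (strictly_increasing_ge phi Iphi n).
  pose proof (inv_INR_S_le (phi n) N2 ltac:(unfold n in *; lia)). lra.
Qed.

Lemma kernel_comb_attains_max D (H : HilbertSpace) (a : RD D -> H) n
  (p : Fin.t n -> RD D) (c : Fin.t n -> R) t0 :
  admissible_kernel H a ->
  0 < rsum n (fun j => c j * kappa H a t0 (p j)) ->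
  exists y, forall t, rsum n (fun j => c j * kappa H a t (p j)) <=
                      rsum n (fun j => c j * kappa H a y (p j)).
Proof.
  intros Hk Hf0. set (f := fun t => rsum n (fun j => c j * kappa H a t (p j))).
  change (0 < f t0) in Hf0. change (exists y, forall t, f t <= f y).
  set (Sc := rsum n (fun j => Rabs (c j))).
  assert (HSc : 0 <= Sc) by (apply rsum_nonneg; intros; apply Rabs_pos).
  assert (Hf_le : forall t e, (forall j, Rabs (kappa H a t (p j)) <= e) -> f t <= Sc * e).
  { intros t e He. eapply Rle_trans; [apply Rle_abs | apply rsum_mul_abs_le, He]. }
  set (eps := f t0 / (Sc + 1)).
  assert (Heps : 0 < eps) by (apply Rdiv_lt_0_compat; lra).
  destruct (fin_eventually_R n (fun j x => forall t, enorm t = x -> kappa H a t (p j) <= eps))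
    as [r Hr].
  { intros j. destruct Hk as [_ [_ [K3 _]]].
    destruct (K3 eps (p j) Heps) as [K [[_ [r Hr]] [b [Hb HK]]]].
    exists r. intros x Hx t Ht. enough (NK : ~ K t) by (specialize (HK t NK); lra).
    intros Kt. specialize (Hr t Kt). lra. }
  apply (continuous_attains_max D f t0 r (Sc * eps)).
  - intros t e He.
    destruct (kappa_equicontinuous D H a Hk t (e / (Sc + 1))) as [d [Hd Hd2]];
      [apply Rdiv_lt_0_compat; lra|].
    exists d. split; auto. intros t' Htt'. unfold f. rewrite <- rsum_minus.
    rewrite (rsum_ext _ _ (fun j => c j * (kappa H a t' (p j) - kappa H a t (p j))))
      by (intros; ring).
    eapply Rle_lt_trans; [apply rsum_mul_abs_le; intros j; left; apply (Hd2 t' (p j) Htt')|].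
    fold Sc. assert (E : e = e / (Sc + 1) * (Sc + 1)) by (field; lra).
    assert (0 < e / (Sc + 1)) by (apply Rdiv_lt_0_compat; lra). nra.
  - exists (Sc * 1). intros t. apply Hf_le. intros j.
    pose proof (kappa_bounds D H a Hk t (p j)). rewrite Rabs_pos_eq; lra.
  - assert (E : f t0 = eps * (Sc + 1)) by (unfold eps; field; lra). nra.
  - intros t Ht. apply Hf_le. intros j. pose proof (kappa_bounds D H a Hk t (p j)).
    rewrite Rabs_pos_eq by lra. exact (Hr _ Ht j t eq_refl).
Qed.

Definition card {n} (U : Fin.t n -> bool) : nat :=
  fsum 0%nat Nat.add n (fun l => if U l then 1%nat else 0%nat).

Definition remove {n} (U : Fin.t n -> bool) (l : Fin.t n) : Fin.t n -> bool :=
  fun j => if Fin.eq_dec j l then false else U j.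

Lemma card_S n (U : Fin.t (S n) -> bool) :
  card U = ((if U Fin.F1 then 1 else 0) + card (fun i => U (Fin.FS i)))%nat.
Proof. reflexivity. Qed.

Lemma card_ext n (U U' : Fin.t n -> bool) : (forall i, U i = U' i) -> card U = card U'.
Proof.
  induction n; intros E; [reflexivity|]. rewrite !card_S, E.
  f_equal. apply (IHn (fun i => U (Fin.FS i)) (fun i => U' (Fin.FS i))). intros; apply E.
Qed.

Lemma remove_self n (U : Fin.t n -> bool) l : remove U l l = false.
Proof. unfold remove. destruct (Fin.eq_dec l l); congruence. Qed.

Lemma remove_other n (U : Fin.t n -> bool) l j : j <> l -> remove U l j = U j.
Proof. unfold remove. destruct (Fin.eq_dec j l); congruence. Qed.

Lemma remove_true n (U : Fin.t n -> bool) l j : remove U l j = true <-> U j = true /\ j <> l.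
Proof. unfold remove. destruct (Fin.eq_dec j l); split; intuition congruence. Qed.

Lemma card_remove n (U : Fin.t n -> bool) l : U l = true -> S (card (remove U l)) = card U.
Proof.
  induction n; [inversion l|]. revert U. pattern l; apply Fin.caseS'.
  - intros U Hl. rewrite !card_S, remove_self, Hl.
    rewrite (card_ext n _ (fun i => U (Fin.FS i))); [lia|].
    intros i. apply remove_other. intros E; inversion E.
  - intros p U Hl. rewrite !card_S, remove_other by (intros E; inversion E).
    rewrite <- (IHn (fun i => U (Fin.FS i)) p Hl).
    rewrite (card_ext n _ (remove (fun i => U (Fin.FS i)) p)); [lia|].
    intros i. destruct (Fin.eq_dec i p) as [<-|E]; [rewrite !remove_self; reflexivity|].
    rewrite !remove_other; auto. intros E'. apply Fin.FS_inj in E'. auto.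
Qed.

Definition supported {m} (U : Fin.t m -> bool) (c : Fin.t m -> R) : Prop :=
  forall j, U j = false -> c j = 0.

Lemma supported_remove m (U : Fin.t m -> bool) l c : supported (remove U l) c -> supported U c.
Proof.
  intros Hc j Uj. apply Hc. destruct (remove U l j) eqn:E; auto.
  apply remove_true in E. destruct E; congruence.
Qed.

Lemma supported_all m c : supported (fun _ : Fin.t m => true) c.
Proof. intros j E. discriminate. Qed.

Lemma psi_supported D m (k : RD D -> RD D -> R) ts T c t :
  supported T c -> @psi D m k ts T c t = rsum m (fun j => c j * k t (ts j)).
Proof.
  intros Hc. apply rsum_ext. intros j. destruct (T j) eqn:Tj; [reflexivity|].
  rewrite (Hc j Tj); ring.
Qed.

Section Projections.
Variables (D m : nat) (H : HilbertSpace) (a : RD D -> H) (ts : Fin.t m -> RD D).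
Hypothesis Hk : admissible_kernel H a.
Hypothesis HS : admissible_support (kappa H a) ts.

Local Notation A l := (a (ts l)).
Local Notation V := (lincomb (fun l => a (ts l))).

Definition same_on (U : Fin.t m -> bool) (v w : H) : Prop :=
  forall j, U j = true -> inner H v (A j) = inner H w (A j).

(* [b] is the coefficient vector of the orthogonal projection of atom [l] onto the span of the
   other atoms of [U]. *)
Definition subconvex_projection U l (b : Fin.t m -> R) : Prop :=
  supported (remove U l) b /\ (forall j, 0 <= b j) /\ rsum m b < 1 /\
  same_on (remove U l) (V b) (A l).

Definition subconvex_projections U (B : Fin.t m -> Fin.t m -> R) : Prop :=
  forall l, U l = true -> subconvex_projection U l (B l).

Definition residual (B : Fin.t m -> Fin.t m -> R) l : H := hsub (A l) (V (B l)).

Definition gap B l : R := inner H (residual B l) (A l).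

(* Coefficients of [sum_(i in U) w i * residual B i] on the atoms. *)
Definition residual_comb (U : Fin.t m -> bool) (B : Fin.t m -> Fin.t m -> R) (w : Fin.t m -> R)
  : Fin.t m -> R :=
  fun k => rsum m (fun i => if U i then w i * (delta i k - B i k) else 0).

Lemma psi_inner T c t : supported T c -> psi (kappa H a) ts T c t = inner H (a t) (V c).
Proof. intros Hc. rewrite psi_supported, inner_lincomb_r by exact Hc. reflexivity. Qed.

Lemma same_on_comb U v w c : supported U c -> same_on U v w -> inner H v (V c) = inner H w (V c).
Proof.
  intros Hc Hvw. rewrite !inner_lincomb_r. apply rsum_ext. intros j.
  destruct (U j) eqn:Uj; [rewrite Hvw by exact Uj; reflexivity | rewrite (Hc j Uj); ring].
Qed.

Lemma inner_residual_l B i z :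
  inner H (residual B i) z = rsum m (fun k => (delta i k - B i k) * inner H (A k) z).
Proof.
  unfold residual. rewrite inner_sub_l, inner_lincomb_l. symmetry.
  rewrite (rsum_ext _ _ (fun k => delta i k * inner H (A k) z - B i k * inner H (A k) z))
    by (intros; ring).
  rewrite rsum_minus, rsum_delta_l. reflexivity.
Qed.

Lemma inner_residual_comb_l U B w z :
  inner H (V (residual_comb U B w)) z =
  rsum m (fun i => if U i then w i * inner H (residual B i) z else 0).
Proof.
  rewrite inner_lincomb_l. unfold residual_comb.
  etransitivity; [apply rsum_ext; intros k; rewrite <- rsum_scal_r; reflexivity|].
  rewrite rsum_comm. apply rsum_ext. intros i. destruct (U i).
  - rewrite inner_residual_l, <- rsum_scal_l. apply rsum_ext. intros; ring.
  - apply rsum_eq_0. intros; ring.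
Qed.

Lemma inner_residual_nonneg U B l y :
  subconvex_projections U B -> U l = true -> 0 <= inner H (a y) (residual B l).
Proof.
  intros HB Ul. destruct (HB l Ul) as [Hsupp [Hpos [Hsum Horth]]].
  set (b := B l) in *. unfold residual. fold b. rewrite inner_sub_r.
  set (T := fun j => if Rlt_dec 0 (b j) then true else false).
  assert (HT : supported T b).
  { intros j. unfold T. destruct (Rlt_dec 0 (b j)); [discriminate|]. specialize (Hpos j). lra. }
  assert (HT2 : forall j, T j = true -> 0 < b j).
  { intros j. unfold T. destruct (Rlt_dec 0 (b j)); [auto|discriminate]. }
  assert (HTU : forall j, T j = true -> remove U l j = true).
  { intros j Tj. destruct (remove U l j) eqn:E; auto.
    specialize (HT2 j Tj). rewrite (Hsupp j E) in HT2; lra. }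
  destruct (classic (exists j, T j = true)) as [Hex|Hnex].
  - assert (Hs2 : rsum m (fun j => if T j then b j else 0) < 1).
    { rewrite (rsum_ext _ _ b); auto. intros j. destruct (T j) eqn:Tj; auto. rewrite HT; auto. }
    destruct (HS T b Hex HT2 Hs2) as [_ Hbelow].
    assert (Tl : T l = false).
    { destruct (T l) eqn:Tl; auto. specialize (HTU l Tl). rewrite remove_self in HTU.
      discriminate. }
    assert (Hatoms : forall l', T l' = true ->
              psi (kappa H a) ts T b (ts l') - kappa H a (ts l') (ts l) <= 0).
    { intros l' Tl'. rewrite psi_inner by exact HT. unfold kappa.
      rewrite inner_sym, (inner_sym H (A l')), (Horth l' (HTU l' Tl')). lra. }
    specialize (Hbelow l Tl Hatoms y). rewrite psi_inner in Hbelow by exact HT.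
    unfold kappa in Hbelow. lra.
  - assert (Hb0 : forall j, b j = 0).
    { intros j. apply HT. destruct (T j) eqn:Tj; auto. exfalso; apply Hnex; exists j; auto. }
    rewrite inner_lincomb_r, rsum_eq_0 by (intros j; rewrite Hb0; ring).
    pose proof (kappa_bounds D H a Hk y (ts l)). unfold kappa in *. lra.
Qed.

Section Fixed_support.
Variables (U : Fin.t m -> bool) (B : Fin.t m -> Fin.t m -> R).
Hypothesis HB : subconvex_projections U B.

Lemma residual_inner_atom l j : U l = true -> U j = true ->
  inner H (residual B l) (A j) = delta l j * gap B l.
Proof.
  intros Ul Uj. destruct (Fin.eq_dec l j) as [<-|E].
  - rewrite delta_refl. unfold gap. ring.
  - rewrite delta_neq by exact E. destruct (HB l Ul) as [_ [_ [_ Horth]]].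
    unfold residual. rewrite inner_sub_l, Horth; [ring|]. apply remove_true; auto.
Qed.

Lemma gap_pos l : U l = true -> 0 < gap B l.
Proof.
  intros Ul. destruct (HB l Ul) as [_ [Hpos [Hsum _]]].
  unfold gap, residual. rewrite inner_sub_l, inner_lincomb_l.
  destruct Hk as [K1 _]. unfold kappa in K1. rewrite K1.
  enough (rsum m (fun j => B l j * inner H (A j) (A l)) <= rsum m (B l)) by lra.
  apply rsum_le. intros j. pose proof (kappa_bounds D H a Hk (ts j) (ts l)).
  unfold kappa in *. specialize (Hpos j). nra.
Qed.

Lemma rsum_inner_atom_residual c l : supported U c -> U l = true ->
  rsum m (fun j => c j * inner H (A j) (residual B l)) = c l * gap B l.
Proof.
  intros Hc Ul. rewrite <- (rsum_delta_l m l (fun j => c j * gap B l)).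
  apply rsum_ext. intros j. destruct (U j) eqn:Uj.
  - rewrite inner_sym, residual_inner_atom by assumption. ring.
  - rewrite (Hc j Uj). ring.
Qed.

Lemma inner_comb_residual c l : supported U c -> U l = true ->
  inner H (V c) (residual B l) = c l * gap B l.
Proof. intros. rewrite inner_lincomb_l. apply rsum_inner_atom_residual; assumption. Qed.

Lemma same_on_residual v w l : same_on U v w -> U l = true ->
  inner H v (residual B l) = inner H w (residual B l).
Proof.
  intros Hvw Ul. destruct (HB l Ul) as [Hsupp _]. unfold residual. rewrite !inner_sub_r.
  rewrite (same_on_comb U v w), Hvw by (auto; exact (supported_remove m U l _ Hsupp)).
  reflexivity.
Qed.

Lemma residual_comb_supported w : supported U (residual_comb U B w).
Proof.
  intros k Uk. apply rsum_eq_0. intros i.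
  destruct (U i) eqn:Ui; [|reflexivity].
  destruct (HB i Ui) as [Hsupp _]. rewrite (supported_remove m U i _ Hsupp k Uk).
  rewrite delta_neq by congruence. ring.
Qed.

Lemma residual_comb_inner_atom w j : U j = true ->
  inner H (V (residual_comb U B w)) (A j) = w j * gap B j.
Proof.
  intros Uj. rewrite inner_residual_comb_l, <- (rsum_delta_l m j (fun i => w i * gap B i)).
  apply rsum_ext. intros i. destruct (U i) eqn:Ui.
  - rewrite residual_inner_atom by assumption.
    destruct (Fin.eq_dec i j) as [<-|E]; [ring|].
    rewrite !delta_neq by congruence. ring.
  - rewrite delta_neq by congruence. ring.
Qed.

Definition ones_dual : Fin.t m -> R := residual_comb U B (fun i => / gap B i).

Lemma ones_dual_inner_atom j : U j = true -> inner H (V ones_dual) (A j) = 1.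
Proof.
  intros Uj. unfold ones_dual. rewrite residual_comb_inner_atom by exact Uj.
  pose proof (gap_pos j Uj). field. lra.
Qed.

Lemma ones_dual_pos l : U l = true -> 0 < ones_dual l.
Proof.
  intros Ul. destruct (HB l Ul) as [Hsupp [_ [Hsum _]]].
  assert (E : ones_dual l * gap B l = 1 - rsum m (B l)).
  { rewrite <- inner_comb_residual by (auto; apply residual_comb_supported).
    rewrite inner_sym, inner_residual_l.
    rewrite (rsum_ext _ _ (fun k => delta l k * 1 - B l k)), rsum_minus, rsum_delta_l;
      [reflexivity|].
    intros k. destruct (U k) eqn:Uk.
    - rewrite inner_sym, ones_dual_inner_atom by exact Uk. ring.
    - rewrite (supported_remove m U l _ Hsupp k Uk), delta_neq by congruence. ring. }
  pose proof (gap_pos l Ul). nra.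
Qed.

Lemma ones_dual_nonneg l : 0 <= ones_dual l.
Proof.
  destruct (U l) eqn:Ul; [left; apply ones_dual_pos; exact Ul|].
  unfold ones_dual. rewrite (residual_comb_supported _ l Ul). lra.
Qed.

(* Scaled to total mass below 1, [ones_dual] is an admissible weight vector whose [psi] takes
   the same value at every atom of [U]; as [psi] attains its maximum, and only at atoms, [psi x]
   is strictly smaller. *)
Lemma ones_dual_inner_lt_one x l0 : U l0 = true -> (forall l, U l = true -> x <> ts l) ->
  inner H (a x) (V ones_dual) < 1.
Proof.
  intros Ul0 Hx. set (al := ones_dual).
  assert (Hsupp : supported U al) by apply residual_comb_supported.
  set (s := / (rsum m al + 1)).
  assert (HSa : 0 <= rsum m al) by (apply rsum_nonneg; apply ones_dual_nonneg).
  assert (Hs : 0 < s) by (apply Rinv_0_lt_compat; lra).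
  set (cc := fun j => s * al j).
  assert (Hcc : supported U cc) by (intros j Uj; unfold cc; rewrite Hsupp; [ring|exact Uj]).
  assert (Hpsi : forall t, psi (kappa H a) ts U cc t = s * inner H (a t) (V al)).
  { intros t. rewrite psi_inner, !inner_lincomb_r, <- rsum_scal_l by exact Hcc.
    apply rsum_ext. intros; unfold cc; ring. }
  assert (Hatom : forall l, U l = true -> inner H (A l) (V al) = 1).
  { intros l Ul. rewrite inner_sym. apply ones_dual_inner_atom, Ul. }
  assert (Hsum : rsum m (fun j => if U j then cc j else 0) < 1).
  { rewrite (rsum_ext _ _ cc) by (intros j; destruct (U j) eqn:Uj; auto; rewrite Hcc; auto).
    unfold cc. rewrite rsum_scal_l. unfold s.
    apply (Rmult_lt_reg_r (rsum m al + 1)); [lra|]. field_simplify; lra. }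
  assert (Hccp : forall l, U l = true -> 0 < cc l)
    by (intros l Ul; apply Rmult_lt_0_compat; [exact Hs | apply ones_dual_pos, Ul]).
  destruct (HS U cc (ex_intro _ l0 Ul0) Hccp Hsum) as [Hmax_at_atoms _].
  assert (Hf : forall t, rsum m (fun j => cc j * kappa H a t (ts j)) = s * inner H (a t) (V al))
    by (intros t; rewrite <- (psi_supported D m _ ts U cc t Hcc); apply Hpsi).
  destruct (kernel_comb_attains_max D H a m ts cc (ts l0) Hk) as [y Hy].
  { rewrite Hf, Hatom by exact Ul0. nra. }
  assert (Hmax : forall t, psi (kappa H a) ts U cc t <= psi (kappa H a) ts U cc y)
    by (intros t; rewrite !Hpsi, <- !Hf; apply Hy).
  destruct (Hmax_at_atoms y Hmax) as [l1 [Ul1 ->]].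
  rewrite Hpsi, Hatom in Hmax by exact Ul1.
  apply Rnot_le_lt. intros Hge.
  destruct (Hmax_at_atoms x) as [l2 [Ul2 Ex]]; [|exact (Hx l2 Ul2 Ex)].
  intros t'. rewrite !Hpsi. specialize (Hmax t'). rewrite Hpsi in Hmax. nra.
Qed.

Lemma projection_subconvex x c :
  (forall l, U l = true -> x <> ts l) -> supported U c -> same_on U (V c) (a x) ->
  (forall l, 0 <= c l) /\ rsum m c < 1.
Proof.
  intros Hx Hc Ho. split.
  - intros l. destruct (U l) eqn:Ul; [|rewrite Hc by exact Ul; lra].
    pose proof (same_on_residual _ _ l Ho Ul) as E.
    rewrite inner_comb_residual in E by assumption.
    pose proof (inner_residual_nonneg U B l x HB Ul). pose proof (gap_pos l Ul). nra.
  - destruct (classic (exists l0, U l0 = true)) as [[l0 Ul0]|Hnone].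
    + assert (E : rsum m c = inner H (a x) (V ones_dual)).
      { rewrite <- (same_on_comb U (V c)) by (auto; apply residual_comb_supported).
        rewrite inner_lincomb_l. apply rsum_ext. intros j. destruct (U j) eqn:Uj.
        - rewrite inner_sym, ones_dual_inner_atom by exact Uj. ring.
        - rewrite (Hc j Uj). ring. }
      rewrite E. exact (ones_dual_inner_lt_one x l0 Ul0 Hx).
    + rewrite rsum_eq_0; [lra|]. intros j. apply Hc. destruct (U j) eqn:Uj; auto. exfalso; eauto.
Qed.

End Fixed_support.

Hypothesis Hdist : forall l l', ts l = ts l' -> l = l'.

(* Induction on the size of [U]: the projection of atom [l] onto the atoms of [remove U l] is
   built from the residuals of that smaller support, and [projection_subconvex] with [x := ts l]
   shows that it is subconvex. *)
Lemma subconvex_projections_exist U : exists B, subconvex_projections U B.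
Proof.
  remember (card U) as n eqn:Hn. revert U Hn. induction n as [|n IH]; intros U Hn.
  - exists (fun _ _ => 0). intros l Ul. pose proof (card_remove m U l Ul). lia.
  - apply (choice (fun l b => U l = true -> subconvex_projection U l b)). intros l.
    destruct (U l) eqn:Ul; [|exists (fun _ => 0); discriminate].
    set (U' := remove U l).
    destruct (IH U') as [B' HB']; [pose proof (card_remove m U l Ul); unfold U'; lia|].
    set (c := residual_comb U' B' (fun i => inner H (A l) (A i) / gap B' i)).
    assert (Hc : supported U' c) by apply (residual_comb_supported U' B' HB').
    assert (Ho : same_on U' (V c) (A l)).
    { intros j Uj. unfold c. rewrite (residual_comb_inner_atom U' B' HB') by exact Uj.
      pose proof (gap_pos U' B' HB' j Uj). field. lra. }
    assert (Hx : forall j, U' j = true -> ts l <> ts j).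
    { intros j Uj E. apply remove_true in Uj. destruct Uj as [_ Nj]. apply Nj, Hdist. auto. }
    destruct (projection_subconvex U' B' HB' (ts l) c Hx Hc Ho) as [Hpos Hsum].
    exists c. intros _. repeat split; auto.
Qed.

Section Full_support.
Variable B : Fin.t m -> Fin.t m -> R.
Hypothesis HB : subconvex_projections (fun _ => true) B.

Local Notation G := (fun l l' => kappa H a (ts l) (ts l')).

Lemma atoms_lin_indep : lin_indep H (fun l => A l).
Proof.
  intros c Hc l. pose proof (gap_pos _ B HB l eq_refl).
  pose proof (inner_comb_residual _ B HB c l (supported_all m c) eq_refl) as E.
  change (V c = hzero H) in Hc. rewrite Hc, inner_zero_l in E. nra.
Qed.

Lemma residual_coef_sym i k :
  (delta i k - B i k) / gap B i = (delta k i - B k i) / gap B k.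
Proof.
  pose proof (rsum_inner_atom_residual _ B HB _ k (supported_all m (fun j => delta i j - B i j))
                eq_refl) as Eik.
  pose proof (rsum_inner_atom_residual _ B HB _ i (supported_all m (fun j => delta k j - B k j))
                eq_refl) as Eki.
  cbv beta in Eik, Eki. rewrite <- inner_residual_l in Eik, Eki. rewrite inner_sym, Eki in Eik.
  pose proof (gap_pos _ B HB i eq_refl). pose proof (gap_pos _ B HB k eq_refl).
  apply (Rmult_eq_reg_r (gap B i * gap B k)); [|nra]. field_simplify; lra.
Qed.

Lemma gram_row_residual i j :
  rsum m (fun k => (delta i k - B i k) / gap B i * G k j) = delta i j.
Proof.
  rewrite (rsum_ext _ _ (fun k => / gap B i * ((delta i k - B i k) * inner H (A k) (A j))))
    by (intros; unfold kappa, Rdiv; ring).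
  rewrite rsum_scal_l, <- inner_residual_l, (residual_inner_atom _ B HB) by reflexivity.
  pose proof (gap_pos _ B HB i eq_refl). field. lra.
Qed.

Lemma gram_inverse : is_inverse G (fun i k => (delta i k - B i k) / gap B i).
Proof.
  split; [apply gram_row_residual|]. intros i j.
  rewrite (rsum_ext _ _ (fun k => (delta j k - B j k) / gap B j * G k i))
    by (intros; rewrite residual_coef_sym, kappa_sym; ring).
  rewrite gram_row_residual. unfold delta.
  destruct (Fin.eq_dec j i), (Fin.eq_dec i j); congruence.
Qed.

Lemma gram_inverse_l1norm_lt_one Gi t : is_inverse G Gi -> (forall l, t <> ts l) ->
  l1norm (matvec Gi (fun l => kappa H a t (ts l))) < 1.
Proof.
  intros [_ HGi] Ht. set (w := matvec Gi (fun l => kappa H a t (ts l))).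
  assert (Ho : same_on (fun _ => true) (V w) (a t)).
  { intros j _. rewrite inner_lincomb_l. unfold w, matvec.
    etransitivity; [apply rsum_ext; intros l; rewrite <- rsum_scal_r; reflexivity|].
    rewrite rsum_comm. change (inner H (a t) (A j)) with (kappa H a t (ts j)).
    rewrite <- (rsum_delta_l m j (fun i => kappa H a t (ts i))).
    apply rsum_ext. intros i. rewrite <- (HGi j i), <- rsum_scal_r.
    apply rsum_ext. intros l. unfold kappa. rewrite (inner_sym H (A l)). ring. }
  destruct (projection_subconvex _ B HB t w (fun l _ => Ht l) (supported_all m w) Ho)
    as [Hpos Hsum].
  unfold l1norm. rewrite (rsum_ext _ _ w); auto. intros i. apply Rabs_pos_eq, Hpos.
Qed.

End Full_support.
End Projections.

Theorem mainTheorem3 (D m : nat) (H : HilbertSpace) (a : RD D -> H)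
  (ts : Fin.t m -> RD D)
  (Hk : admissible_kernel H a)
  (Hdist : forall l l', ts l = ts l' -> l = l')
  (HS : admissible_support (kappa H a) ts) :
  lin_indep H (fun l => a (ts l)) /\
  (let G := fun l l' => kappa H a (ts l) (ts l') in
   (exists Gi, is_inverse G Gi) /\
   forall Gi, is_inverse G Gi ->
   forall t : RD D, (forall l, t <> ts l) ->
     l1norm (matvec Gi (fun l => kappa H a t (ts l))) < 1).
Proof.
  destruct (subconvex_projections_exist D m H a ts Hk HS Hdist (fun _ => true)) as [B HB].
  split; [exact (atoms_lin_indep D m H a ts Hk B HB)|]. split.
  - eexists. exact (gram_inverse D m H a ts Hk B HB).
  - intros Gi HGi t Ht. exact (gram_inverse_l1norm_lt_one D m H a ts Hk HS B HB Gi t HGi Ht).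
Qed.
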